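(* Let $A$ be a sequence algebra. If a normed $A$-module $X$ is essential and homogeneous, then its completion $\overline X$ is also essential and homogeneous.
   Context: Modules are contractive ($\|a\cdot x\|\le\|a\|\|x\|$); the completion carries the continuously extended action. A sequence algebra is a normed algebra of complex sequences with coordinatewise operations containing $c_{00}$ as a dense subalgebra, with $\|\mathbf p^n\|=1$, where $\mathbf p^n$ has $1$ in place $n$ and $0$ elsewhere. For $x\in X$, $x_n:=\mathbf p^n\cdot x$. $X$ is essential if the closed linear span of $\{a\cdot x\}$ is $X$; homogeneous if $\|x_n\|\le\|y_n\|$ for all $n$ implies $\|x\|\le\|y\|$. *)

From Stdlib Require Import Reals.
Open Scope R_scope.

Record C : Type := mkC { Re : R; Im : R }.
Definition C0 : C := mkC 0 0.
Definition C1 : C := mkC 1 0.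
Definition Cplus (z w : C) : C := mkC (Re z + Re w) (Im z + Im w).
Definition Copp (z : C) : C := mkC (- Re z) (- Im z).
Definition Cmult (z w : C) : C :=
  mkC (Re z * Re w - Im z * Im w) (Re z * Im w + Im z * Re w).
Definition Cmod (z : C) : R := sqrt (Re z ^ 2 + Im z ^ 2).

Definition cseq := nat -> C.
Definition seq_zero : cseq := fun _ => C0.
Definition seq_add (a b : cseq) : cseq := fun n => Cplus (a n) (b n).
Definition seq_opp (a : cseq) : cseq := fun n => Copp (a n).
Definition seq_sub (a b : cseq) : cseq := seq_add a (seq_opp b).
Definition seq_mul (a b : cseq) : cseq := fun n => Cmult (a n) (b n).
Definition seq_scal (l : C) (a : cseq) : cseq := fun n => Cmult l (a n).
Definition c00 (a : cseq) : Prop := exists N : nat, forall n, (N <= n)%nat -> a n = C0.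
Definition unit_seq (n : nat) : cseq := fun m => if Nat.eqb m n then C1 else C0.

Record SeqAlgebra : Type := {
  sa_mem : cseq -> Prop;
  sa_norm : cseq -> R;
  sa_mem_zero : sa_mem seq_zero;
  sa_mem_add : forall a b, sa_mem a -> sa_mem b -> sa_mem (seq_add a b);
  sa_mem_scal : forall l a, sa_mem a -> sa_mem (seq_scal l a);
  sa_mem_mul : forall a b, sa_mem a -> sa_mem b -> sa_mem (seq_mul a b);
  sa_c00 : forall a, c00 a -> sa_mem a;
  sa_norm_nonneg : forall a, sa_mem a -> 0 <= sa_norm a;
  sa_norm_eq0 : forall a, sa_mem a -> sa_norm a = 0 -> a = seq_zero;
  sa_norm_triangle : forall a b, sa_mem a -> sa_mem b ->
      sa_norm (seq_add a b) <= sa_norm a + sa_norm b;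
  sa_norm_scal : forall l a, sa_mem a -> sa_norm (seq_scal l a) = Cmod l * sa_norm a;
  sa_norm_mul : forall a b, sa_mem a -> sa_mem b ->
      sa_norm (seq_mul a b) <= sa_norm a * sa_norm b;
  sa_c00_dense : forall a, sa_mem a -> forall eps, 0 < eps ->
      exists b, c00 b /\ sa_norm (seq_sub a b) < eps;
  sa_norm_unit : forall n, sa_norm (unit_seq n) = 1
}.

Record NormedModule (A : SeqAlgebra) : Type := {
  nm_car :> Type;
  nm_zero : nm_car;
  nm_add : nm_car -> nm_car -> nm_car;
  nm_opp : nm_car -> nm_car;
  nm_scal : C -> nm_car -> nm_car;
  nm_norm : nm_car -> R;
  nm_act : cseq -> nm_car -> nm_car;
  nm_addA : forall x y z, nm_add x (nm_add y z) = nm_add (nm_add x y) z;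
  nm_addC : forall x y, nm_add x y = nm_add y x;
  nm_add0 : forall x, nm_add x nm_zero = x;
  nm_addN : forall x, nm_add x (nm_opp x) = nm_zero;
  nm_scal1 : forall x, nm_scal C1 x = x;
  nm_scalA : forall l m x, nm_scal l (nm_scal m x) = nm_scal (Cmult l m) x;
  nm_scalDr : forall l x y, nm_scal l (nm_add x y) = nm_add (nm_scal l x) (nm_scal l y);
  nm_scalDl : forall l m x, nm_scal (Cplus l m) x = nm_add (nm_scal l x) (nm_scal m x);
  nm_norm_nonneg : forall x, 0 <= nm_norm x;
  nm_norm_eq0 : forall x, nm_norm x = 0 -> x = nm_zero;
  nm_norm_triangle : forall x y, nm_norm (nm_add x y) <= nm_norm x + nm_norm y;
  nm_norm_scal : forall l x, nm_norm (nm_scal l x) = Cmod l * nm_norm x;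
  nm_act_addr : forall a x y, sa_mem A a ->
      nm_act a (nm_add x y) = nm_add (nm_act a x) (nm_act a y);
  nm_act_addl : forall a b x, sa_mem A a -> sa_mem A b ->
      nm_act (seq_add a b) x = nm_add (nm_act a x) (nm_act b x);
  nm_act_scall : forall l a x, sa_mem A a ->
      nm_act (seq_scal l a) x = nm_scal l (nm_act a x);
  nm_act_scalr : forall l a x, sa_mem A a ->
      nm_act a (nm_scal l x) = nm_scal l (nm_act a x);
  nm_act_mul : forall a b x, sa_mem A a -> sa_mem A b ->
      nm_act (seq_mul a b) x = nm_act a (nm_act b x);
  nm_act_contr : forall a x, sa_mem A a ->
      nm_norm (nm_act a x) <= sa_norm A a * nm_norm x
}.

Arguments nm_zero {A} n.
Arguments nm_add {A n}.
Arguments nm_opp {A n}.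
Arguments nm_scal {A n}.
Arguments nm_norm {A n}.
Arguments nm_act {A n}.

Definition nm_dist {A : SeqAlgebra} {X : NormedModule A} (x y : X) : R :=
  nm_norm (nm_add x (nm_opp y)).

Definition coord {A : SeqAlgebra} {X : NormedModule A} (n : nat) (x : X) : X :=
  nm_act (unit_seq n) x.

Inductive in_act_span {A : SeqAlgebra} (X : NormedModule A) : X -> Prop :=
  | span_zero : in_act_span X (nm_zero X)
  | span_gen : forall a x, sa_mem A a -> in_act_span X (nm_act a x)
  | span_add : forall y z, in_act_span X y -> in_act_span X z ->
      in_act_span X (nm_add y z)
  | span_scal : forall l y, in_act_span X y -> in_act_span X (nm_scal l y).

(* essential: the closed linear span of {a . x} is X, i.e. the linear span is dense *)
Definition essential {A : SeqAlgebra} (X : NormedModule A) : Prop :=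
  forall x : X, forall eps, 0 < eps -> exists y, in_act_span X y /\ nm_dist x y < eps.

Definition homogeneous {A : SeqAlgebra} (X : NormedModule A) : Prop :=
  forall x y : X, (forall n, nm_norm (coord n x) <= nm_norm (coord n y)) ->
    nm_norm x <= nm_norm y.

Definition cauchy_seq {A : SeqAlgebra} {X : NormedModule A} (u : nat -> X) : Prop :=
  forall eps, 0 < eps -> exists N, forall m n, (N <= m)%nat -> (N <= n)%nat ->
    nm_dist (u m) (u n) < eps.
Definition converges_to {A : SeqAlgebra} {X : NormedModule A} (u : nat -> X) (l : X) : Prop :=
  forall eps, 0 < eps -> exists N, forall n, (N <= n)%nat -> nm_dist (u n) l < eps.
Definition complete {A : SeqAlgebra} (X : NormedModule A) : Prop :=
  forall u : nat -> X, cauchy_seq u -> exists l, converges_to u l.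

(* Such (Y, j) is unique up to isometric module isomorphism,
   and the action on Y is the continuous extension of the action on X. *)
Definition is_completion {A : SeqAlgebra} (X Y : NormedModule A) (j : X -> Y) : Prop :=
  complete Y /\
  (forall x y, j (nm_add x y) = nm_add (j x) (j y)) /\
  (forall l x, j (nm_scal l x) = nm_scal l (j x)) /\
  (forall x, nm_norm (j x) = nm_norm x) /\
  (forall a x, sa_mem A a -> j (nm_act a x) = nm_act a (j x)) /\
  (forall y : Y, forall eps, 0 < eps -> exists x : X, nm_dist y (j x) < eps).

From Stdlib Require Import Reals Lra Lia FunctionalExtensionality.
Open Scope R_scope.

(* Write P_M for the action of the indicator sequence of {0, ..., M-1}.
   - Essentiality passes to the completion Y because j(X) is dense in Y and
     j maps the span of {a . x} into the span of {a . y}.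
   - Homogeneity: in a homogeneous module every truncation P_M is
     contractive, since (P_M x)_n is x_n or 0; this extends to Y by density.
     In an essential module whose truncations are contractive, P_N y -> y,
     because the span of {a . x} is approximated by finitely supported
     vectors (approximate each a by a finitely supported sequence).
     Finally, if ||y1_n|| <= ||y2_n|| for all n, approximate y1, y2 by
     j x1, j x2; then ||x1_n|| <= ||x2_n|| + d, and shrinking the finitely
     many coordinates x1_n (n < M) by factors in [0, 1] produces a vector
     dominated coordinatewise by x2, at distance <= M d from P_M x1.
     Homogeneity of X then gives ||P_M y1|| <= ||y2|| + eps, and letting
     M grow, ||y1|| <= ||y2||. *)

Lemma C_ext (z w : C) : Re z = Re w -> Im z = Im w -> z = w.
Proof. destruct z, w; simpl; intros; subst; reflexivity. Qed.

Lemma Cmod_real (r : R) : Cmod (mkC r 0) = Rabs r.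
Proof. unfold Cmod; simpl. rewrite <- sqrt_Rsqr_abs. f_equal. unfold Rsqr. ring. Qed.

Lemma Cmod_nonneg (z : C) : 0 <= Cmod z.
Proof. unfold Cmod. apply sqrt_pos. Qed.

Lemma mul_lt_of_lt_div (r n eps : R) :
  0 <= r -> 0 <= n -> r < eps / (n + 1) -> r * n < eps.
Proof.
  intros Hr Hn H.
  assert (E : eps / (n + 1) * (n + 1) = eps) by (field; lra).
  nra.
Qed.

Definition shrink (a b : R) : R := if Rle_dec a b then 1 else b / a.

Lemma shrink_spec (a b d : R) : 0 <= b -> 0 <= d -> a <= b + d ->
  Rabs (shrink a b) * a <= b /\ Rabs (1 - shrink a b) * a <= d.
Proof.
  intros Hb Hd Hab. unfold shrink. destruct (Rle_dec a b) as [Hle | Hgt].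
  - rewrite Rabs_R1, Rminus_diag, Rabs_R0. lra.
  - assert (Ha : 0 < a) by lra.
    assert (Eq : b / a * a = b) by (field; lra).
    assert (Hq : 0 <= b / a <= 1).
    { split; [apply Rmult_le_pos; [lra | left; apply Rinv_0_lt_compat; lra]|].
      apply Rmult_le_reg_r with a; [lra|]. rewrite Eq. lra. }
    rewrite !Rabs_pos_eq by lra. rewrite Eq. nra.
Qed.

Definition trunc_seq (M : nat) : cseq := fun m => if Nat.ltb m M then C1 else C0.

Lemma unit_seq_c00 (n : nat) : c00 (unit_seq n).
Proof. exists (S n). intros m Hm. unfold unit_seq. destruct (Nat.eqb_spec m n); [lia|auto]. Qed.

Lemma trunc_seq_c00 (M : nat) : c00 (trunc_seq M).
Proof. exists M. intros m Hm. unfold trunc_seq. destruct (Nat.ltb_spec m M); [lia|auto]. Qed.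

Lemma trunc_seq_0 : trunc_seq 0 = seq_zero.
Proof. extensionality m. unfold trunc_seq. destruct (Nat.ltb_spec m 0); [lia|reflexivity]. Qed.

Lemma trunc_seq_S (M : nat) : trunc_seq (S M) = seq_add (trunc_seq M) (unit_seq M).
Proof.
  extensionality m. unfold trunc_seq, unit_seq, seq_add.
  destruct (Nat.ltb_spec m (S M)), (Nat.ltb_spec m M), (Nat.eqb_spec m M);
    try lia; apply C_ext; simpl; ring.
Qed.

Lemma trunc_seq_values (M n : nat) : trunc_seq M n = C1 \/ trunc_seq M n = C0.
Proof. unfold trunc_seq. destruct (Nat.ltb n M); auto. Qed.

Lemma trunc_seq_mul (M N : nat) (b : cseq) :
  (forall n, (N <= n)%nat -> b n = C0) -> (N <= M)%nat -> seq_mul (trunc_seq M) b = b.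
Proof.
  intros Hb HM. extensionality m. unfold seq_mul, trunc_seq.
  destruct (Nat.ltb_spec m M).
  - apply C_ext; simpl; ring.
  - rewrite (Hb m) by lia. apply C_ext; simpl; ring.
Qed.

Lemma unit_seq_mul (n : nat) (b : cseq) : seq_mul (unit_seq n) b = seq_scal (b n) (unit_seq n).
Proof.
  extensionality m. unfold seq_mul, seq_scal, unit_seq.
  destruct (Nat.eqb_spec m n); [subst|]; apply C_ext; simpl; ring.
Qed.

Lemma seq_add_zero : seq_add seq_zero seq_zero = seq_zero.
Proof. extensionality m. apply C_ext; simpl; ring. Qed.

Lemma seq_sub_add (a b : cseq) : seq_add (seq_sub a b) b = a.
Proof. extensionality m. unfold seq_add, seq_sub, seq_opp. apply C_ext; simpl; ring. Qed.

Lemma sa_mem_sub (A : SeqAlgebra) (a b : cseq) :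
  sa_mem A a -> sa_mem A b -> sa_mem A (seq_sub a b).
Proof.
  intros Ha Hb. replace (seq_sub a b) with (seq_add a (seq_scal (mkC (-1) 0) b)).
  - apply sa_mem_add; [|apply sa_mem_scal]; assumption.
  - extensionality m. unfold seq_sub, seq_add, seq_scal, seq_opp. apply C_ext; simpl; ring.
Qed.

Lemma sa_mem_unit (A : SeqAlgebra) (n : nat) : sa_mem A (unit_seq n).
Proof. apply sa_c00, unit_seq_c00. Qed.

Lemma sa_mem_trunc (A : SeqAlgebra) (M : nat) : sa_mem A (trunc_seq M).
Proof. apply sa_c00, trunc_seq_c00. Qed.

Section ModuleArithmetic.
Context {A : SeqAlgebra} {X : NormedModule A}.

Definition nm_sub (x y : X) : X := nm_add x (nm_opp y).

Lemma dist_norm_sub (x y : X) : nm_dist x y = nm_norm (nm_sub x y).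
Proof. reflexivity. Qed.

Lemma add0l (x : X) : nm_add (nm_zero X) x = x.
Proof. rewrite nm_addC. apply nm_add0. Qed.

Lemma addNl (x : X) : nm_add (nm_opp x) x = nm_zero X.
Proof. rewrite nm_addC. apply nm_addN. Qed.

Lemma add_cancel (x y z : X) : nm_add x y = nm_add x z -> y = z.
Proof.
  intro H. rewrite <- (add0l y), <- (add0l z), <- (addNl x), <- !nm_addA, H.
  reflexivity.
Qed.

Lemma opp_unique (x y : X) : nm_add x y = nm_zero X -> y = nm_opp x.
Proof. intro H. apply (add_cancel x). rewrite H, nm_addN. reflexivity. Qed.

Lemma zero_unique (x : X) : nm_add x x = x -> x = nm_zero X.
Proof. intro H. apply (add_cancel x). rewrite H, nm_add0. reflexivity. Qed.

Lemma subK (x y : X) : nm_add (nm_sub x y) y = x.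
Proof. unfold nm_sub. rewrite <- nm_addA, addNl, nm_add0. reflexivity. Qed.

Lemma sub_trans (x y z : X) : nm_sub x z = nm_add (nm_sub x y) (nm_sub y z).
Proof. unfold nm_sub at 3. rewrite nm_addA, subK. reflexivity. Qed.

Lemma sub_swap (x y : X) : nm_sub y x = nm_opp (nm_sub x y).
Proof. apply opp_unique. rewrite <- sub_trans. apply nm_addN. Qed.

Lemma opp_add (x y : X) : nm_opp (nm_add x y) = nm_add (nm_opp x) (nm_opp y).
Proof.
  symmetry. apply opp_unique.
  rewrite <- nm_addA, (nm_addA _ _ y), (nm_addC _ _ y (nm_opp x)), <- nm_addA,
    nm_addN, nm_add0, nm_addN.
  reflexivity.
Qed.

Lemma sub_add2 (a b c d : X) :
  nm_sub (nm_add a b) (nm_add c d) = nm_add (nm_sub a c) (nm_sub b d).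
Proof.
  unfold nm_sub. rewrite opp_add, <- !nm_addA. f_equal.
  rewrite !nm_addA. f_equal. apply nm_addC.
Qed.

Lemma scal0l (x : X) : nm_scal C0 x = nm_zero X.
Proof.
  apply zero_unique. rewrite <- nm_scalDl.
  replace (Cplus C0 C0) with C0 by (apply C_ext; simpl; ring). reflexivity.
Qed.

Lemma scal0r (l : C) : nm_scal l (nm_zero X) = nm_zero X.
Proof. apply zero_unique. rewrite <- nm_scalDr, nm_add0. reflexivity. Qed.

Lemma norm0 : nm_norm (nm_zero X) = 0.
Proof.
  rewrite <- (scal0l (nm_zero X)), nm_norm_scal. unfold C0.
  rewrite Cmod_real, Rabs_R0. ring.
Qed.

Lemma scal_oppl (l : C) (x : X) : nm_scal (Copp l) x = nm_opp (nm_scal l x).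
Proof.
  apply opp_unique. rewrite <- nm_scalDl.
  replace (Cplus l (Copp l)) with C0 by (apply C_ext; simpl; ring). apply scal0l.
Qed.

Lemma scal_opp (l : C) (x : X) : nm_scal l (nm_opp x) = nm_opp (nm_scal l x).
Proof. apply opp_unique. rewrite <- nm_scalDr, nm_addN. apply scal0r. Qed.

Lemma scal_sub (l : C) (x y : X) :
  nm_sub (nm_scal l x) (nm_scal l y) = nm_scal l (nm_sub x y).
Proof. unfold nm_sub. rewrite nm_scalDr, scal_opp. reflexivity. Qed.

Lemma sub_scal_real (r : R) (x : X) :
  nm_sub x (nm_scal (mkC r 0) x) = nm_scal (mkC (1 - r) 0) x.
Proof.
  unfold nm_sub. rewrite <- scal_oppl. rewrite <- (nm_scal1 _ _ x) at 1.
  rewrite <- nm_scalDl. f_equal. apply C_ext; simpl; ring.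
Qed.

Lemma norm_opp (x : X) : nm_norm (nm_opp x) = nm_norm x.
Proof.
  rewrite <- (nm_scal1 _ _ x) at 1. rewrite <- scal_oppl, nm_norm_scal.
  replace (Copp C1) with (mkC (-1) 0) by (apply C_ext; simpl; ring).
  rewrite Cmod_real, Rabs_left by lra. ring.
Qed.

Lemma dist_sym (x y : X) : nm_dist x y = nm_dist y x.
Proof. rewrite !dist_norm_sub, (sub_swap x y), norm_opp. reflexivity. Qed.

Lemma dist_tri (x y z : X) : nm_dist x z <= nm_dist x y + nm_dist y z.
Proof. rewrite !dist_norm_sub, (sub_trans x y z). apply nm_norm_triangle. Qed.

Lemma dist_self (x : X) : nm_dist x x = 0.
Proof. unfold nm_dist. rewrite nm_addN. apply norm0. Qed.

Lemma norm_le_dist (u v : X) : nm_norm u <= nm_norm v + nm_dist u v.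
Proof.
  rewrite <- (subK u v) at 1. rewrite Rplus_comm, dist_norm_sub.
  apply nm_norm_triangle.
Qed.

Lemma act0r (a : cseq) : sa_mem A a -> nm_act a (nm_zero X) = nm_zero X.
Proof. intro Ha. apply zero_unique. rewrite <- nm_act_addr, nm_add0 by assumption. reflexivity. Qed.

Lemma act0l (x : X) : nm_act seq_zero x = nm_zero X.
Proof.
  pose proof (sa_mem_zero A) as H0.
  apply zero_unique. rewrite <- nm_act_addl, seq_add_zero by assumption. reflexivity.
Qed.

Lemma act_sub (a : cseq) (x y : X) :
  sa_mem A a -> nm_act a (nm_sub x y) = nm_sub (nm_act a x) (nm_act a y).
Proof.
  intro Ha. unfold nm_sub. rewrite nm_act_addr by assumption. f_equal.
  apply opp_unique. rewrite <- nm_act_addr, nm_addN by assumption. apply act0r, Ha.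
Qed.

Lemma act_subl (a b : cseq) (x : X) : sa_mem A a -> sa_mem A b ->
  nm_sub (nm_act a x) (nm_act b x) = nm_act (seq_sub a b) x.
Proof.
  intros Ha Hb. rewrite <- (seq_sub_add a b) at 1.
  rewrite nm_act_addl by (try apply sa_mem_sub; assumption).
  unfold nm_sub. rewrite <- nm_addA, nm_addN, nm_add0. reflexivity.
Qed.

Lemma act_dist (a : cseq) (x y : X) : sa_mem A a ->
  nm_dist (nm_act a x) (nm_act a y) <= sa_norm A a * nm_dist x y.
Proof. intro Ha. rewrite !dist_norm_sub, <- act_sub by assumption. apply nm_act_contr, Ha. Qed.

Lemma coord_act (n : nat) (b : cseq) (x : X) : sa_mem A b ->
  coord n (nm_act b x) = nm_scal (b n) (coord n x).
Proof.
  intro Hb. unfold coord. rewrite <- nm_act_mul by (try apply sa_mem_unit; assumption).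
  rewrite unit_seq_mul, nm_act_scall by apply sa_mem_unit. reflexivity.
Qed.

Lemma coord_add (n : nat) (x y : X) : coord n (nm_add x y) = nm_add (coord n x) (coord n y).
Proof. apply nm_act_addr, sa_mem_unit. Qed.

Lemma coord_scal (n : nat) (l : C) (x : X) : coord n (nm_scal l x) = nm_scal l (coord n x).
Proof. apply nm_act_scalr, sa_mem_unit. Qed.

(* Since ||p^n|| = 1, each coordinate map is 1-Lipschitz. *)
Lemma coord_norm_lipschitz (n : nat) (x y : X) :
  nm_norm (coord n x) <= nm_norm (coord n y) + nm_dist x y.
Proof.
  pose proof (act_dist (unit_seq n) x y (sa_mem_unit A n)) as H.
  rewrite sa_norm_unit, Rmult_1_l in H.
  pose proof (norm_le_dist (coord n x) (coord n y)). unfold coord in *. lra.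
Qed.

End ModuleArithmetic.

Section Truncations.
Context {A : SeqAlgebra} {X : NormedModule A}.

Fixpoint weighted_trunc (c : nat -> R) (x : X) (k : nat) : X :=
  match k with
  | O => nm_zero X
  | S k => nm_add (weighted_trunc c x k) (nm_scal (mkC (c k) 0) (coord k x))
  end.

Lemma coord_weighted_trunc (c : nat -> R) (x : X) (n k : nat) :
  coord n (weighted_trunc c x k) =
  if Nat.ltb n k then nm_scal (mkC (c n) 0) (coord n x) else nm_zero X.
Proof.
  induction k as [|k IHk]; simpl.
  - apply act0r, sa_mem_unit.
  - rewrite coord_add, IHk, coord_scal. unfold coord at 3.
    rewrite coord_act by apply sa_mem_unit. unfold unit_seq.
    destruct (Nat.ltb_spec n k), (Nat.ltb_spec n (S k)), (Nat.eqb_spec n k); try lia.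
    + rewrite scal0l, scal0r, nm_add0. reflexivity.
    + subst. rewrite nm_scal1, add0l. reflexivity.
    + rewrite scal0l, scal0r, nm_add0. reflexivity.
Qed.

Lemma trunc_sub_weighted (c : nat -> R) (x : X) (d : R) (k : nat) :
  (forall n, Rabs (1 - c n) * nm_norm (coord n x) <= d) ->
  nm_norm (nm_sub (nm_act (trunc_seq k) x) (weighted_trunc c x k)) <= INR k * d.
Proof.
  intro Hd. induction k as [|k IHk]; cbn [weighted_trunc].
  - rewrite trunc_seq_0, act0l. unfold nm_sub. rewrite nm_addN, norm0. simpl. lra.
  - rewrite trunc_seq_S, nm_act_addl by (apply sa_mem_trunc || apply sa_mem_unit).
    rewrite sub_add2. eapply Rle_trans; [apply nm_norm_triangle|].
    fold (coord k x). rewrite sub_scal_real, nm_norm_scal, Cmod_real, S_INR.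
    specialize (Hd k). lra.
Qed.

Hypothesis hom : homogeneous X.

(* In a homogeneous module every truncation is contractive, because each
   coordinate of [P_M x] is [x_n] or [0]. *)
Lemma trunc_contractive (M : nat) (x : X) :
  nm_norm (nm_act (trunc_seq M) x) <= nm_norm x.
Proof.
  apply hom. intro n. rewrite coord_act by apply sa_mem_trunc.
  destruct (trunc_seq_values M n) as [-> | ->].
  - rewrite nm_scal1. lra.
  - rewrite scal0l, norm0. apply nm_norm_nonneg.
Qed.

Lemma trunc_approx_homogeneous (x y : X) (M : nat) (d : R) : 0 <= d ->
  (forall n, nm_norm (coord n x) <= nm_norm (coord n y) + d) ->
  nm_norm (nm_act (trunc_seq M) x) <= nm_norm y + INR M * d.
Proof.
  intros Hd Hxy.
  set (c n := shrink (nm_norm (coord n x)) (nm_norm (coord n y))).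
  assert (Hc : forall n, Rabs (c n) * nm_norm (coord n x) <= nm_norm (coord n y) /\
                         Rabs (1 - c n) * nm_norm (coord n x) <= d).
  { intro n. apply shrink_spec; auto. apply nm_norm_nonneg. }
  assert (Hdom : nm_norm (weighted_trunc c x M) <= nm_norm y).
  { apply hom. intro n. rewrite coord_weighted_trunc. destruct (Nat.ltb n M).
    - rewrite nm_norm_scal, Cmod_real. apply Hc.
    - rewrite norm0. apply nm_norm_nonneg. }
  assert (Herr := trunc_sub_weighted c x d M (fun n => proj2 (Hc n))).
  pose proof (norm_le_dist (nm_act (trunc_seq M) x) (weighted_trunc c x M)).
  rewrite dist_norm_sub in *. lra.
Qed.

End Truncations.

Section Essential.
Context {A : SeqAlgebra} {X : NormedModule A}.

Definition finsupp (f : X) (N : nat) : Prop :=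
  forall M, (N <= M)%nat -> nm_act (trunc_seq M) f = f.

(* Every element of the span of {a . x} is a limit of finitely supported
   vectors: approximate each [a] by a finitely supported sequence. *)
Lemma span_finsupp_approx (s : X) : in_act_span X s ->
  forall eps, 0 < eps -> exists f N, finsupp f N /\ nm_dist s f < eps.
Proof.
  induction 1 as [| a x Ha | y z _ IHy _ IHz | l y _ IHy]; intros eps Heps.
  - exists (nm_zero X), O. split.
    + intros M _. apply act0r, sa_mem_trunc.
    + rewrite dist_self. lra.
  - pose proof (nm_norm_nonneg _ _ x) as Hx.
    destruct (sa_c00_dense A a Ha (eps / (nm_norm x + 1))) as [b [[N Hb] Hab]].
    { apply Rdiv_lt_0_compat; lra. }
    assert (Hbm : sa_mem A b) by (apply sa_c00; exists N; auto).
    exists (nm_act b x), N. split.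
    + intros M HM. rewrite <- nm_act_mul by (try apply sa_mem_trunc; assumption).
      rewrite (trunc_seq_mul M N b); auto.
    + rewrite dist_norm_sub, act_subl by assumption.
      eapply Rle_lt_trans; [apply nm_act_contr, sa_mem_sub; assumption|].
      apply mul_lt_of_lt_div; auto. apply sa_norm_nonneg, sa_mem_sub; assumption.
  - destruct (IHy (eps / 2)) as [f1 [N1 [H1 D1]]]; [lra|].
    destruct (IHz (eps / 2)) as [f2 [N2 [H2 D2]]]; [lra|].
    exists (nm_add f1 f2), (Nat.max N1 N2). split.
    + intros M HM. rewrite nm_act_addr by apply sa_mem_trunc.
      rewrite H1, H2 by lia. reflexivity.
    + rewrite dist_norm_sub in *. rewrite sub_add2.
      eapply Rle_lt_trans; [apply nm_norm_triangle|]. lra.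
  - pose proof (Cmod_nonneg l) as Hl.
    destruct (IHy (eps / (Cmod l + 1))) as [f [N [Hf Df]]].
    { apply Rdiv_lt_0_compat; lra. }
    exists (nm_scal l f), N. split.
    + intros M HM. rewrite nm_act_scalr by apply sa_mem_trunc. rewrite Hf; auto.
    + rewrite dist_norm_sub in *. rewrite scal_sub, nm_norm_scal, Rmult_comm.
      apply mul_lt_of_lt_div; auto. apply nm_norm_nonneg.
Qed.

Hypothesis ess : essential X.
Hypothesis trunc_contr : forall (M : nat) (x : X), nm_norm (nm_act (trunc_seq M) x) <= nm_norm x.

Lemma truncations_approximate (x : X) (eps : R) : 0 < eps ->
  exists N, nm_dist x (nm_act (trunc_seq N) x) < eps.
Proof.
  intro Heps.
  destruct (ess x (eps / 4)) as [s [Hs Dxs]]; [lra|].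
  destruct (span_finsupp_approx s Hs (eps / 4)) as [f [N [Hf Dsf]]]; [lra|].
  assert (Dxf : nm_dist x f < eps / 2).
  { pose proof (dist_tri x s f). lra. }
  exists N.
  assert (Dtrunc : nm_dist f (nm_act (trunc_seq N) x) <= nm_dist f x).
  { rewrite <- (Hf N) at 1 by lia. rewrite !dist_norm_sub, <- act_sub by apply sa_mem_trunc.
    apply trunc_contr. }
  pose proof (dist_tri x f (nm_act (trunc_seq N) x)).
  rewrite (dist_sym f x) in Dtrunc. lra.
Qed.

End Essential.

Section Completion.
Context {A : SeqAlgebra} {X Y : NormedModule A} (j : X -> Y).
Hypothesis hj : is_completion X Y j.

Lemma j_add (x y : X) : j (nm_add x y) = nm_add (j x) (j y).
Proof. apply hj. Qed.

Lemma j_scal (l : C) (x : X) : j (nm_scal l x) = nm_scal l (j x).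
Proof. apply hj. Qed.

Lemma j_norm (x : X) : nm_norm (j x) = nm_norm x.
Proof. apply hj. Qed.

Lemma j_act (a : cseq) (x : X) : sa_mem A a -> j (nm_act a x) = nm_act a (j x).
Proof. apply hj. Qed.

Lemma j_dense (y : Y) (eps : R) : 0 < eps -> exists x, nm_dist y (j x) < eps.
Proof. apply hj. Qed.

Lemma j_zero : j (nm_zero X) = nm_zero Y.
Proof. apply zero_unique. rewrite <- j_add, nm_add0. reflexivity. Qed.

Lemma j_dist (x y : X) : nm_dist (j x) (j y) = nm_dist x y.
Proof.
  rewrite !dist_norm_sub, <- j_norm. unfold nm_sub. rewrite j_add. f_equal. f_equal.
  symmetry. apply opp_unique. rewrite <- j_add, nm_addN. apply j_zero.
Qed.

Lemma span_image (s : X) : in_act_span X s -> in_act_span Y (j s).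
Proof.
  induction 1.
  - rewrite j_zero. constructor.
  - rewrite j_act by assumption. constructor; assumption.
  - rewrite j_add. constructor; assumption.
  - rewrite j_scal. constructor; assumption.
Qed.

Lemma essential_completion : essential X -> essential Y.
Proof.
  intros ess y eps Heps.
  destruct (j_dense y (eps / 2)) as [x Dyx]; [lra|].
  destruct (ess x (eps / 2)) as [s [Hs Dxs]]; [lra|].
  exists (j s). split; [apply span_image, Hs|].
  pose proof (dist_tri y (j x) (j s)). rewrite j_dist in *. lra.
Qed.

Lemma contraction_extends (a : cseq) : sa_mem A a ->
  (forall x : X, nm_norm (nm_act a x) <= nm_norm x) ->
  forall y : Y, nm_norm (nm_act a y) <= nm_norm y.
Proof.
  intros Ha Hcontr y. apply Rle_plus_epsilon. intros eps Heps.
  set (K := sa_norm A a). assert (HK : 0 <= K) by apply sa_norm_nonneg, Ha.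
  destruct (j_dense y (eps / (K + 2))) as [x Dyx].
  { apply Rdiv_lt_0_compat; lra. }
  assert (Hsmall : eps / (K + 2) * (K + 1) < eps).
  { assert (E : eps / (K + 2) * (K + 2) = eps) by (field; lra).
    nra. }
  pose proof (norm_le_dist (nm_act a y) (nm_act a (j x))) as T1.
  pose proof (act_dist a y (j x) Ha) as T2. fold K in T2.
  rewrite <- (j_act a x), j_norm in T1 at 1 by assumption.
  pose proof (Hcontr x) as T3.
  pose proof (norm_le_dist (j x) y) as T4. rewrite j_norm, dist_sym in T4.
  assert (K * nm_dist y (j x) <= K * (eps / (K + 2))) by (apply Rmult_le_compat_l; lra).
  lra.
Qed.

Hypothesis hom : homogeneous X.

Lemma trunc_contractive_completion (M : nat) (y : Y) :
  nm_norm (nm_act (trunc_seq M) y) <= nm_norm y.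
Proof.
  apply contraction_extends; [apply sa_mem_trunc|]. intro x. apply trunc_contractive, hom.
Qed.

Lemma trunc_dominated_completion (y1 y2 : Y) (M : nat) (eps : R) :
  (forall n, nm_norm (coord n y1) <= nm_norm (coord n y2)) -> 0 < eps ->
  nm_norm (nm_act (trunc_seq M) y1) <= nm_norm y2 + eps.
Proof.
  intros Hy Heps. pose proof (pos_INR M) as HM.
  set (d := eps / (2 * INR M + 3)).
  assert (Hd : 0 < d) by (apply Rdiv_lt_0_compat; lra).
  assert (Ed : d * (2 * INR M + 3) = eps) by (unfold d; field; lra).
  destruct (j_dense y1 d Hd) as [x1 D1].
  destruct (j_dense y2 d Hd) as [x2 D2].
  assert (Hcoord : forall n, nm_norm (coord n x1) <= nm_norm (coord n x2) + 2 * d).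
  { intro n. unfold coord.
    rewrite <- (j_norm (nm_act _ x1)), <- (j_norm (nm_act _ x2)), !j_act by apply sa_mem_unit.
    pose proof (coord_norm_lipschitz n (j x1) y1). pose proof (coord_norm_lipschitz n y2 (j x2)).
    pose proof (Hy n). rewrite (dist_sym (j x1) y1) in *. unfold coord in *. lra. }
  pose proof (trunc_approx_homogeneous hom x1 x2 M (2 * d) ltac:(lra) Hcoord) as HX.
  assert (Htrunc : nm_dist (nm_act (trunc_seq M) y1) (nm_act (trunc_seq M) (j x1))
                   <= nm_dist y1 (j x1)).
  { rewrite !dist_norm_sub, <- act_sub by apply sa_mem_trunc.
    apply trunc_contractive_completion. }
  pose proof (norm_le_dist (nm_act (trunc_seq M) y1) (nm_act (trunc_seq M) (j x1))) as T1.
  rewrite <- j_act, j_norm in T1 at 1 by apply sa_mem_trunc.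
  pose proof (norm_le_dist (j x2) y2) as T2. rewrite j_norm, dist_sym in T2.
  nra.
Qed.

Lemma homogeneous_completion : essential X -> homogeneous Y.
Proof.
  intros ess y1 y2 Hy. apply Rle_plus_epsilon. intros eps Heps.
  destruct (truncations_approximate (essential_completion ess)
              trunc_contractive_completion y1 (eps / 2)) as [N DN]; [lra|].
  pose proof (trunc_dominated_completion y1 y2 N (eps / 2) Hy ltac:(lra)).
  pose proof (norm_le_dist y1 (nm_act (trunc_seq N) y1)). lra.
Qed.

End Completion.

Theorem proposition1p6 (A : SeqAlgebra) (X Y : NormedModule A) (j : X -> Y)
  (hj : is_completion X Y j) :
  essential X -> homogeneous X -> essential Y /\ homogeneous Y.
Proof.
  intros ess hom. split.
  - exact (essential_completion j hj ess).
  - exact (homogeneous_completion j hj hom ess).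
Qed.
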